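(* Let $m\in\mathbb{Z}_{>0}$, let $V$ be an irreducible $\mathcal{G}^{(m,0)}$-module, and suppose there is an odd integer $k\ge m-1$ such that $L_{k+j}v=H_{k+j}v=I_{k+j}v=J_{k+j}v=0$ for all $v\in V$, $j\in\mathbb{Z}_{>0}$, and $I_{k-i}v=\alpha_{k-i}v$, $J_{k-i}v=\beta_{k-i}v$ for all $v\in V$, $0\le i\le m-1$, with $\alpha_{k-i},\beta_{k-i}\in\mathbb{C}$ and $\alpha_k\beta_k\neq0$. Let $V_0=\mathrm{Ind}_{\mathcal{G}^{(m,0)}}^{\mathcal{G}_0}V$, let $v\in V_0\setminus V$ (where $V$ is identified with $1\otimes V$) and let $\deg(v)=(\mathbf{h},\mathbf{l})$. Then: (1) If $\mathbf{h}\ne\mathbf{0}$ and $r=\min\{i:h_i\ne0\}$, then $\deg\big((I_{k-r}-\alpha_{k-r})v\big)=(\mathbf{h}-\epsilon_r,\mathbf{l})$. (2) If $\mathbf{h}=\mathbf{0}$, $\mathbf{l}\ne\mathbf{0}$ and $s=\max\{i:l_i\ne0\}$, then $\deg\big((I_{k-s}-\alpha_{k-s})v\big)=(\mathbf{0},\mathbf{l}-\epsilon_s)$ or $\deg\big((J_{k-s}-\beta_{k-s})v\big)=(\mathbf{0},\mathbf{l}-\epsilon_s)$.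
   Context: $\mathcal{G}$ is the complex Lie algebra with basis $\{L_n,H_n,I_n,J_n,\mathbf{c}_1,\mathbf{c}_2,\mathbf{c}_3: n\in\mathbb{Z}\}$ whose brackets of basis elements are $[L_m,L_n]=(n-m)L_{m+n}+\frac{m^3-m}{12}\delta_{m+n,0}\mathbf{c}_1$, $[L_m,H_n]=nH_{m+n}+m^2\delta_{m+n,0}\mathbf{c}_2$, $[H_m,H_n]=m\delta_{m+n,0}\mathbf{c}_3$, $[L_m,I_n]=(n-m)I_{m+n}$, $[L_m,J_n]=(n-m)J_{m+n}$, $[H_m,I_n]=I_{m+n}$, $[H_m,J_n]=-J_{m+n}$ (and antisymmetric counterparts), all other brackets of basis elements zero. $\mathcal{G}^{(m,0)}=\sum_{i\ge0}(\mathbb{C}L_{m+i}+\mathbb{C}H_{m+i}+\mathbb{C}I_{i}+\mathbb{C}J_{i})+\sum_{k=1}^3\mathbb{C}\mathbf{c}_k$, $\mathcal{G}_0=\sum_{i\ge0}(\mathbb{C}L_{i}+\mathbb{C}H_{i}+\mathbb{C}I_{i}+\mathbb{C}J_{i})+\sum_{k=1}^3\mathbb{C}\mathbf{c}_k$, and $V_0=\mathcal{U}(\mathcal{G}_0)\otimes_{\mathcal{U}(\mathcal{G}^{(m,0)})}V$. Orders and degree: elements of $\mathbb{N}^m$ are written $\mathbf{i}=(i_{m-1},\dots,i_1,i_0)$; $\epsilon_k$ has $1$ in the position of index $k$ and $0$ elsewhere; $\mathbf{w}(\mathbf{i})=\sum_{k=0}^{m-1}(m-k)i_k$. On $\mathbb{N}^m$,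 $\mathbf{i}\succ\mathbf{j}$ iff there is $k$ with $i_k>j_k$ and $i_s=j_s$ for all $s<k$. On $\mathbb{N}^m\times\mathbb{N}^m$, $(\mathbf{h},\mathbf{l})\succ(\mathbf{h}',\mathbf{l}')$ iff either $\mathbf{w}(\mathbf{h})+\mathbf{w}(\mathbf{l})>\mathbf{w}(\mathbf{h}')+\mathbf{w}(\mathbf{l}')$, or these weights are equal and $\mathbf{l}\succ\mathbf{l}'$, or the weights are equal, $\mathbf{l}=\mathbf{l}'$ and $\mathbf{h}\succ\mathbf{h}'$. Set $H^{\mathbf{h}}L^{\mathbf{l}}=H_{m-1}^{h_{m-1}}\cdots H_0^{h_0}L_{m-1}^{l_{m-1}}\cdots L_0^{l_0}$. By PBW every $v\in V_0$ is uniquely $\sum_{\mathbf{h},\mathbf{l}}H^{\mathbf{h}}L^{\mathbf{l}}v_{\mathbf{h},\mathbf{l}}$ with $v_{\mathbf{h},\mathbf{l}}\in V$, finitely many nonzero; for $v\neq0$, $\deg(v)$ is the $\succ$-maximal $(\mathbf{h},\mathbf{l})$ with $v_{\mathbf{h},\mathbf{l}}\ne0$. *)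

From HB Require Import structures.
From mathcomp Require Import all_boot all_order all_algebra reals.
From mathcomp.real_closed Require Export complex.
Set Implicit Arguments.
Unset Strict Implicit.
Unset Printing Implicit Defensive.
Import GRing.Theory Num.Theory.
Local Open Scope ring_scope.

(* G^{(a,0)} is spanned by L_{a+i}, H_{a+i} (i >= 0), I_i, J_i (i>=0),  *)
(* c_1, c_2, c_3.  A representation on W is given by the operators      *)
(* assigned to these basis elements:                                    *)
(*    opL i = rho(L_{a+i}),  opH i = rho(H_{a+i}),                      *)
(*    opI i = rho(I_i),      opJ i = rho(J_i),   opc_k = rho(c_k),      *)
(* which must be linear and satisfy the bracket relations of G          *)
(* (with [x,y] acting as the commutator).  G^{(0,0)} is G_0.            *)

Section Rep.
Variable K : fieldType.

Definition linmap (U U' : lmodType K) (f : U -> U') :=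
  forall (a : K) (x y : U), f (a *: x + y) = a *: f x + f y.

Variable W : lmodType K.

Definition comm (f g : W -> W) (x : W) : W := f (g x) - g (f x).

Record GRep := {
  opL : nat -> W -> W;
  opH : nat -> W -> W;
  opI : nat -> W -> W;
  opJ : nat -> W -> W;
  opc1 : W -> W;
  opc2 : W -> W;
  opc3 : W -> W }.

Definition delta0 (p q : nat) : K := if (p + q == 0)%N then 1 else 0.

Definition central_op (a : nat) (rho : GRep) (f : W -> W) : Prop :=
  forall (i : nat) (x : W),
  [/\ comm f (opL rho i) x = 0, comm f (opH rho i) x = 0,
      comm f (opI rho i) x = 0, comm f (opJ rho i) x = 0
    & [/\ comm f (opc1 rho) x = 0, comm f (opc2 rho) x = 0
        & comm f (opc3 rho) x = 0]].

(* rho is a representation of G^{(a,0)}.  Here p = a+i, q = a+j are the  *)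
(* actual indices of L_p, H_p, L_q, H_q, and L_{p+q} = opL (a+i+j).      *)
Record is_Grep (a : nat) (rho : GRep) : Prop := {
  lin_L : forall i, linmap (opL rho i);
  lin_H : forall i, linmap (opH rho i);
  lin_I : forall i, linmap (opI rho i);
  lin_J : forall i, linmap (opJ rho i);
  lin_c1 : linmap (opc1 rho);
  lin_c2 : linmap (opc2 rho);
  lin_c3 : linmap (opc3 rho);
  br_LL : forall i j x,
    comm (opL rho i) (opL rho j) x =
      (((a + j)%:R - (a + i)%:R) : K) *: opL rho (a + i + j) x
      + (delta0 (a + i) (a + j) * (((a + i)%:R ^+ 3 - (a + i)%:R) / 12%:R))
          *: opc1 rho x;
  br_LH : forall i j x,
    comm (opL rho i) (opH rho j) x =
      ((a + j)%:R : K) *: opH rho (a + i + j) x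
      + (delta0 (a + i) (a + j) * (a + i)%:R ^+ 2) *: opc2 rho x;
  br_HH : forall i j x,
    comm (opH rho i) (opH rho j) x =
      (delta0 (a + i) (a + j) * (a + i)%:R) *: opc3 rho x;
  br_LI : forall i j x,
    comm (opL rho i) (opI rho j) x =
      ((j%:R - (a + i)%:R) : K) *: opI rho (a + i + j) x;
  br_LJ : forall i j x,
    comm (opL rho i) (opJ rho j) x =
      ((j%:R - (a + i)%:R) : K) *: opJ rho (a + i + j) x;
  br_HI : forall i j x, comm (opH rho i) (opI rho j) x = opI rho (a + i + j) x;
  br_HJ : forall i j x, comm (opH rho i) (opJ rho j) x = - opJ rho (a + i + j) x;
  br_II : forall i j x, comm (opI rho i) (opI rho j) x = 0;
  br_IJ : forall i j x, comm (opI rho i) (opJ rho j) x = 0;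
  br_JJ : forall i j x, comm (opJ rho i) (opJ rho j) x = 0;
  cen_c1 : central_op a rho (opc1 rho);
  cen_c2 : central_op a rho (opc2 rho);
  cen_c3 : central_op a rho (opc3 rho) }.

Definition irreducible (rho : GRep) : Prop :=
  (exists x : W, x != 0) /\
  forall P : W -> Prop,
    P 0 ->
    (forall (c : K) x y, P x -> P y -> P (c *: x + y)) ->
    (forall i x, P x ->
       [/\ P (opL rho i x), P (opH rho i x), P (opI rho i x) & P (opJ rho i x)]) ->
    (forall x, P x -> [/\ P (opc1 rho x), P (opc2 rho x) & P (opc3 rho x)]) ->
    (forall x, P x -> x = 0) \/ (forall x, P x).

End Rep.

Arguments GRep : clear implicits.

(* Module homomorphism from a G^{(a,0)}-rep (on U) to a G^{(b,0)}-rep     *)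
(* (on U'), b + d = a, restricted to G^{(a,0)}: L_{a+i} = opL rho' (d+i). *)
Definition Ghom (K : fieldType) (U U' : lmodType K) (d : nat)
  (rho : GRep K U) (rho' : GRep K U') (f : U -> U') : Prop :=
  linmap f /\
  [/\ forall i x, f (opL rho i x) = opL rho' (d + i) (f x),
      forall i x, f (opH rho i x) = opH rho' (d + i) (f x),
      forall i x, f (opI rho i x) = opI rho' i (f x),
      forall i x, f (opJ rho i x) = opJ rho' i (f x)
    & [/\ forall x, f (opc1 rho x) = opc1 rho' (f x),
          forall x, f (opc2 rho x) = opc2 rho' (f x)
        & forall x, f (opc3 rho x) = opc3 rho' (f x)]].

(* (W, rhoW, iota) is the induced module Ind_{G^{(m,0)}}^{G_0} V:        *)
(* universal property of induction.                                      *)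
Definition is_induced (K : fieldType) (V W : lmodType K) (m : nat)
  (rhoV : GRep K V) (rhoW : GRep K W) (iota : V -> W) : Prop :=
  is_Grep m rhoV /\ is_Grep 0 rhoW /\ Ghom m rhoV rhoW iota /\
  forall (W' : lmodType K) (rho' : GRep K W') (f : V -> W'),
    is_Grep 0 rho' -> Ghom m rhoV rho' f ->
    exists g : W -> W',
      (Ghom 0 rhoW rho' g /\ forall v, g (iota v) = f v) /\
      forall g' : W -> W', Ghom 0 rhoW rho' g' -> (forall v, g' (iota v) = f v) ->
        forall x, g' x = g x.

(* Elements of N^m are {ffun 'I_m -> nat}; h i is the entry h_i.        *)

Section PBW.
Variables (K : fieldType) (V W : lmodType K) (m : nat).
Variables (rhoW : GRep K W) (iota : V -> W).

Definition Nm := {ffun 'I_m -> nat}.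
Definition ix := (Nm * Nm)%type.

(* L^l w = L_{m-1}^{l_{m-1}} ... L_0^{l_0} w  (L_0 applied first) *)
Definition monL (l : Nm) (w : W) : W :=
  foldl (fun acc (i : 'I_m) => iter (l i) (opL rhoW i) acc) w (enum 'I_m).
Definition monH (h : Nm) (w : W) : W :=
  foldl (fun acc (i : 'I_m) => iter (h i) (opH rhoW i) acc) w (enum 'I_m).
Definition mon (p : ix) (w : W) : W := monH p.1 (monL p.2 w).

Definition fsupp (c : ix -> V) (s : seq ix) : Prop :=
  forall p, p \notin s -> c p = 0.

Definition pbw_sum (c : ix -> V) (s : seq ix) : W :=
  \sum_(p <- s) mon p (iota (c p)).

Definition PBW_decomp : Prop :=
  (forall w : W, exists (c : ix -> V) (s : seq ix),
      [/\ uniq s, fsupp c s & w = pbw_sum c s]) /\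
  (forall (c c' : ix -> V) (s : seq ix), uniq s -> fsupp c s -> fsupp c' s ->
      pbw_sum c s = pbw_sum c' s -> forall p, c p = c' p).

Definition wt (i : Nm) : nat := (\sum_(k < m) (m - k) * i k)%N.

Definition succ1 (i j : Nm) : Prop :=
  exists k : 'I_m, (j k < i k)%N /\ forall s : 'I_m, (s < k)%N -> i s = j s.

Definition succ2 (p q : ix) : Prop :=
  (wt q.1 + wt q.2 < wt p.1 + wt p.2)%N
  \/ (wt p.1 + wt p.2 = wt q.1 + wt q.2 /\ succ1 p.2 q.2)
  \/ (wt p.1 + wt p.2 = wt q.1 + wt q.2 /\ p.2 = q.2 /\ succ1 p.1 q.1).

Definition is_deg (w : W) (d : ix) : Prop :=
  exists (c : ix -> V) (s : seq ix),
    [/\ uniq s, fsupp c s, w = pbw_sum c s, c d != 0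
      & forall p, c p != 0 -> p = d \/ succ2 d p].

End PBW.

Definition subeps (m : nat) (i : Nm m) (r : 'I_m) : Nm m :=
  [ffun k => (i k - (k == r))%N].
Definition zeroNm (m : nat) : Nm m := [ffun _ => 0%N].

From Pilot Require Import Defs.
From HB Require Import structures.
From mathcomp Require Import all_boot all_order all_algebra reals.
From mathcomp.real_closed Require Import complex.
From mathcomp Require Import zify.
Import GRing.Theory Num.Theory.

Set Implicit Arguments.
Unset Strict Implicit.
Unset Printing Implicit Defensive.
Local Open Scope ring_scope.

(* Let [Z] be [I] or [J], so that [[H_a, Z_n] = sigma Z_(a+n)] with [sigma = +-1]
   and [[L_a, Z_n] = (n - a) Z_(a+n)].  Commuting [Z_n] through a PBW monomial
   [H^h L^l], each generator of index [a] that is absorbed lowers the weight by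
   [m - a] and raises the index of [Z] by [a].  As [Z_j] kills [V] for [j > k]
   and acts on it by a scalar [zeta_j] for [k - m < j <= k], for [n = k - r] the
   only terms of weight [w(h,l) - (m - r)] are those where a single [H_r] or [L_r]
   was absorbed into [Z_k].  So [(Z_(k-r) - zeta_(k-r)) v] has coefficient
   [- sigma h_r zeta_k v_(h,l)] at [(h - eps_r, l)] and, when [h = 0], coefficient
   [zeta_k (l_r (2r - k) v_(0,l) - sigma v_(eps_r, l - eps_r))] at [(0, l - eps_r)];
   both indices dominate every other term.  As [k] is odd, [l_r (2r - k) <> 0], so
   the last coefficient cannot vanish both for [sigma = 1] and for [sigma = -1]. *)

Section LinearMaps.
Variables (K : fieldType) (U U' U'' : lmodType K).
Implicit Type f : U -> U'.

Lemma linmapD f : linmap f -> forall x y, f (x + y) = f x + f y.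
Proof. by move=> lf x y; have := lf 1 x y; rewrite !scale1r. Qed.

Lemma linmap0 f : linmap f -> f 0 = 0.
Proof. by move=> lf; apply: (@addrI _ (f 0)); rewrite -linmapD // !addr0. Qed.

Lemma linmapZ f : linmap f -> forall a x, f (a *: x) = a *: f x.
Proof. by move=> lf a x; rewrite -[a *: x]addr0 lf linmap0 // addr0. Qed.

Lemma linmap_sum f (I : Type) (s : seq I) (F : I -> U) :
  linmap f -> f (\sum_(i <- s) F i) = \sum_(i <- s) f (F i).
Proof.
move=> lf; elim: s => [|x s IH]; first by rewrite !big_nil linmap0.
by rewrite !big_cons linmapD // IH.
Qed.

Lemma linmap_comp f (g : U' -> U'') : linmap f -> linmap g -> linmap (fun x => g (f x)).
Proof. by move=> lf lg a x y; rewrite lf lg. Qed.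

Lemma linmap_iter n (f : U -> U) : linmap f -> linmap (iter n f).
Proof. by move=> lf; elim: n => [|n IH] //= a x y; rewrite !iterS IH lf. Qed.

End LinearMaps.

Definition addeps (m : nat) (i : Nm m) (r : 'I_m) : Nm m :=
  [ffun k => (i k + (k == r))%N].

Section MultiIndices.
Variable m : nat.
Implicit Types (a b : Nm m) (r : 'I_m).

Lemma addepsE a r i : addeps a r i = (a i + (i == r))%N.
Proof. by rewrite ffunE. Qed.

Lemma subepsE a r i : subeps a r i = (a i - (i == r))%N.
Proof. by rewrite ffunE. Qed.

Lemma zeroNmE i : zeroNm m i = 0%N.
Proof. by rewrite ffunE. Qed.

Lemma addepsK a r : subeps (addeps a r) r = a.
Proof. by apply/ffunP=> i; rewrite subepsE addepsE addnK. Qed.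

Lemma subepsK a r : (0 < a r)%N -> addeps (subeps a r) r = a.
Proof.
move=> ar; apply/ffunP=> i; rewrite addepsE subepsE.
by case: eqP => [->|_]; rewrite ?subn0 ?addn0 // subnK.
Qed.

Lemma subnK_ord (k : nat) r : (m - 1 <= k)%N -> (k - r + r)%N = k.
Proof. by move=> mk; rewrite subnK //; have := ltn_ord r; lia. Qed.

Lemma addeps_subepsC a r j : r != j -> addeps (subeps a j) r = subeps (addeps a r) j.
Proof.
move=> ne; apply/ffunP=> i; rewrite !ffunE.
by case: (eqVneq i r) => [->|_] /=; rewrite ?(negbTE ne) ?subn0 ?addn0.
Qed.

Lemma last_pos a : a != zeroNm m ->
  exists r, (0 < a r)%N /\ forall i : 'I_m, (r < i)%N -> a i = 0%N.
Proof.
move=> nz.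
have [i0 ai0] : exists i0, (0 < a i0)%N.
  apply/existsP; apply: contraR nz => /existsPn a0; apply/eqP/ffunP => i.
  by rewrite zeroNmE; apply/eqP; rewrite -leqn0 leqNgt a0.
have [r ar rmax] := @arg_maxnP _ i0 (fun i => 0 < a i)%N val ai0.
exists r; split=> // i ri; apply/eqP; rewrite -leqn0 leqNgt.
by apply: contraL ri => /rmax; rewrite -leqNgt.
Qed.

Lemma wt_addeps a r : wt (addeps a r) = (wt a + (m - r))%N.
Proof.
rewrite /wt (eq_bigr (fun i : 'I_m => (m - i) * a i + (m - i) * (i == r))%N).
  rewrite big_split /=; congr (_ + _)%N.
  by rewrite (bigD1 r) //= eqxx muln1 big1 ?addn0 // => i /negbTE ->; rewrite muln0.
by move=> i _; rewrite addepsE mulnDr.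
Qed.

Lemma wt_subeps a r : (0 < a r)%N -> wt a = (wt (subeps a r) + (m - r))%N.
Proof. by move=> ar; rewrite -{1}(subepsK ar) wt_addeps. Qed.

Lemma wt_zero : wt (zeroNm m) = 0%N.
Proof. by rewrite /wt big1 // => i _; rewrite zeroNmE muln0. Qed.

Lemma leq_wt a b : (forall i, a i <= b i)%N -> (wt a <= wt b)%N.
Proof. by move=> le_ab; apply: leq_sum => i _; rewrite leq_mul2l le_ab orbT. Qed.

Lemma wt_le_eq a b : (forall i, a i <= b i)%N -> (wt b <= wt a)%N -> a = b.
Proof.
move=> le_ab wt_ba; apply/ffunP => i; apply/eqP; rewrite eqn_leq le_ab leqNgt /=.
apply/negP => lt_i; move: wt_ba; apply/negP; rewrite -ltnNge /wt.
rewrite (bigD1 i) //= [X in (_ < X)%N](bigD1 i) //= -addSn leq_add //.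
  by rewrite ltn_mul2l lt_i subn_gt0 ltn_ord.
by apply: leq_sum => j _; rewrite leq_mul2l le_ab orbT.
Qed.

Lemma wt_eq0 a : wt a = 0%N -> a = zeroNm m.
Proof. by move=> a0; symmetry; apply: wt_le_eq => [i|]; rewrite ?zeroNmE ?a0. Qed.

End MultiIndices.

Section Orders.
Variable m : nat.
Implicit Types (a b l : Nm m) (d p q : ix m) (r : 'I_m).

Definition ixwt p := (wt p.1 + wt p.2)%N.

Definition succeq2 d p := p = d \/ succ2 d p.

Lemma succ1_irr a : ~ succ1 a a.
Proof. by case=> i []; rewrite ltnn. Qed.

Lemma succ1_asym a b : succ1 a b -> ~ succ1 b a.
Proof.
move=> [i [ba_i eq_i]] [j [ab_j eq_j]].
case: (ltngtP i j) => [ij|ji|ij]; first by move: ba_i; rewrite eq_j // ltnn.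
  by move: ab_j; rewrite eq_i // ltnn.
by move: ba_i; rewrite (val_inj ij); lia.
Qed.

Lemma succ1_zero a : ~ succ1 (zeroNm m) a.
Proof. by case=> i []; rewrite zeroNmE. Qed.

Lemma succ1_subeps a b r : succ1 a b -> (0 < b r)%N -> succ1 (subeps a r) (subeps b r).
Proof.
move=> [i [ba_i eq_i]] br; exists i; split=> [|s si]; last by rewrite !subepsE eq_i.
by rewrite !subepsE; case: (eqVneq i r) => [ir|] /=; [rewrite ir in ba_i *; lia | rewrite !subn0].
Qed.

Lemma succ1_subepsr a b r : succ1 a b -> (0 < b r)%N -> succ1 a (subeps b r).
Proof.
move=> [i [ba_i eq_i]] br; case: (ltnP i r) => [ir|ri].
  exists i; split=> [|s si]; rewrite subepsE.
    by rewrite -val_eqE /= ltn_eqF // subn0.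
  by rewrite -val_eqE /= ltn_eqF ?subn0 ?eq_i // (ltn_trans si).
exists r; split=> [|s sr]; rewrite subepsE.
  rewrite eqxx; case: (ltngtP r i) => [ri'|ir|ri']; last first.
  - by rewrite -(val_inj ri') in ba_i; lia.
  - by move: ri; rewrite leqNgt ir.
  - by rewrite eq_i //; lia.
by rewrite -val_eqE /= ltn_eqF ?subn0 ?eq_i // (leq_trans sr).
Qed.

Lemma succ1_subeps_self a r : (0 < a r)%N -> succ1 a (subeps a r).
Proof.
move=> ar; exists r; split=> [|s sr]; rewrite subepsE; first by rewrite eqxx; lia.
by rewrite -val_eqE /= ltn_eqF ?subn0.
Qed.

Lemma succ2_irr p : ~ succ2 p p.
Proof. by case=> [|[[_ /succ1_irr]|[_ [_ /succ1_irr]]]] //; rewrite ltnn. Qed.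

Lemma succ2_asym p q : succ2 p q -> ~ succ2 q p.
Proof.
case=> [lt|[[eq s1]|[eq [e s1]]]] [lt'|[[eq' s1']|[eq' [e' s1']]]]; try lia.
- exact: succ1_asym s1 s1'.
- by move: s1; rewrite e'; apply: succ1_irr.
- by move: s1'; rewrite e; apply: succ1_irr.
- exact: succ1_asym s1 s1'.
Qed.

Lemma succ2_ixwt p q : succ2 p q -> (ixwt q <= ixwt p)%N.
Proof. by rewrite /ixwt => -[|[[]|[]]]; lia. Qed.

Lemma ixwt_subeps1 p r : (0 < p.1 r)%N -> (ixwt (subeps p.1 r, p.2) + (m - r))%N = ixwt p.
Proof. by move=> pr; rewrite /ixwt /= (wt_subeps pr); lia. Qed.

Lemma ixwt_subeps2 p r : (0 < p.2 r)%N -> (ixwt (p.1, subeps p.2 r) + (m - r))%N = ixwt p.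
Proof. by move=> pr; rewrite /ixwt /= (wt_subeps pr); lia. Qed.

Lemma succeq2_ixwt d p : succeq2 d p -> (ixwt p <= ixwt d)%N.
Proof. by case=> [->|/succ2_ixwt]. Qed.

Lemma succ2_addeps2_subeps1 d r : (0 < d.1 r)%N -> succ2 (subeps d.1 r, addeps d.2 r) d.
Proof.
move=> dr; right; left; split; first by rewrite /= wt_addeps (wt_subeps dr); lia.
rewrite /= -{2}(addepsK d.2 r); apply: succ1_subeps_self.
by rewrite addepsE eqxx addn1.
Qed.

Lemma succeq2_subeps1 d p r : (0 < d.1 r)%N -> succeq2 d p -> (0 < p.1 r)%N ->
  succeq2 (subeps d.1 r, d.2) (subeps p.1 r, p.2).
Proof.
move=> dr [->|hp] pr; [by left | right].
move: (ixwt_subeps1 pr) (ixwt_subeps1 dr); rewrite /ixwt /= => wp wd.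
case: hp => [lt|[[eq s1]|[eq [e s1]]]]; rewrite /succ2 /=.
- by left; lia.
- by right; left; split=> //; lia.
- by right; right; split; [lia | split=> //; apply: succ1_subeps].
Qed.

Lemma succeq2_subeps2 d p r : (0 < d.2 r)%N -> succeq2 d p -> (0 < p.2 r)%N ->
  succeq2 (d.1, subeps d.2 r) (p.1, subeps p.2 r).
Proof.
move=> dr [->|hp] pr; [by left | right].
move: (ixwt_subeps2 pr) (ixwt_subeps2 dr); rewrite /ixwt /= => wp wd.
case: hp => [lt|[[eq s1]|[eq [e s1]]]]; rewrite /succ2 /=.
- by left; lia.
- by right; left; split; [lia | apply: succ1_subeps].
- by right; right; split; [lia | rewrite e].
Qed.

Lemma succ2_subeps2_subeps1 d p r : (0 < d.1 r)%N -> succeq2 d p -> (0 < p.2 r)%N ->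
  succ2 (subeps d.1 r, d.2) (p.1, subeps p.2 r).
Proof.
move=> dr [->|hp] pr; move: (ixwt_subeps2 pr) (ixwt_subeps1 dr).
  by rewrite /ixwt /succ2 /= => wp wd; right; left; split; [lia | apply: succ1_subeps_self].
rewrite /ixwt /= => wp wd; case: hp => [lt|[[eq s1]|[eq [e s1]]]]; rewrite /succ2 /=.
- by left; lia.
- by right; left; split; [lia | apply: succ1_subepsr].
- by right; left; split; [lia | rewrite -e; apply: succ1_subeps_self; rewrite e].
Qed.

(* Here [h = 0] and the maximality of [r] are needed: a competitor of the same
   weight that agrees with [l - eps_r] up to [r] must then be [(0, l - eps_r)]. *)
Lemma succeq2_zero_subeps l p r : (0 < l r)%N -> (forall i : 'I_m, (r < i)%N -> l i = 0%N) ->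
  succeq2 (zeroNm m, l) p -> (0 < p.1 r)%N ->
  succeq2 (zeroNm m, subeps l r) (subeps p.1 r, p.2).
Proof.
move=> lr lz [->|hp] pr; first by move: pr; rewrite zeroNmE.
move: (ixwt_subeps1 pr) (ixwt_subeps2 (p := (zeroNm m, l)) lr).
rewrite /ixwt /= wt_zero => wp wd.
rewrite /succ2 /= wt_zero in hp.
case: hp => [lt|[[eq [k0 [lk0 eqk0]]]|[_ [_ /succ1_zero]]]] //; rewrite /succeq2 /succ2 /= wt_zero.
  by right; left; lia.
have k0r : (k0 <= r)%N by rewrite leqNgt; apply/negP => /lz l0; move: lk0; rewrite l0.
case: (ltnP (p.2 k0) (subeps l r k0)) => [lt_k0 | ge_k0].
  right; right; left; split; first by lia.
  exists k0; split=> // i ik0; rewrite subepsE eqk0 //.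
  by rewrite -val_eqE /= ltn_eqF ?subn0 // (leq_trans ik0).
have k0E : k0 = r.
  apply/eqP; apply: contraTT ge_k0 => ne.
  by rewrite subepsE (negbTE ne) subn0 -ltnNge.
subst k0.
have le_p2 : forall i, (subeps l r i <= p.2 i)%N.
  move=> i; rewrite subepsE; case: (ltngtP i r) => [ir|ri|ir].
  - by rewrite eqk0 // leq_subr.
  - by rewrite lz // sub0n.
  - by move: ge_k0; rewrite (val_inj ir) subepsE.
have := leq_wt le_p2 => wt_le; left.
have p1 : subeps p.1 r = zeroNm m by apply: wt_eq0; lia.
by rewrite p1 (wt_le_eq le_p2) //; lia.
Qed.

End Orders.

Section OrderedMonomials.
Variables (K : fieldType) (W : lmodType K) (m : nat).
Implicit Types (f : nat -> W -> W) (e : Nm m) (a : 'I_m) (t : seq 'I_m) (x : W).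

Definition ordered_mon f e (x : W) : W :=
  foldl (fun acc (i : 'I_m) => iter (e i) (f i) acc) x (enum 'I_m).

Definition ordered_monr f e t (x : W) : W :=
  foldr (fun (i : 'I_m) acc => iter (e i) (f i) acc) x t.

Lemma ordered_monE f e x : ordered_mon f e x = ordered_monr f e (rev (enum 'I_m)) x.
Proof. by rewrite /ordered_mon -{1}(revK (enum 'I_m)) foldl_rev. Qed.

Lemma eq_ordered_monr f e e' t x :
  {in t, e =1 e'} -> ordered_monr f e t x = ordered_monr f e' t x.
Proof.
elim: t => [|i t IH] // ee' /=.
by rewrite ee' ?mem_head // IH // => j jt; apply: ee'; rewrite inE jt orbT.
Qed.

Lemma ordered_monr_addeps f e a t x :
  sorted (fun i j : 'I_m => (j < i)%N) t -> a \in t ->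
  (forall i : 'I_m, (a < i)%N -> e i = 0%N) ->
  ordered_monr f (addeps e a) t x = f a (ordered_monr f e t x).
Proof.
elim: t => [|i t IH] //= st; rewrite inE => /orP ha ez.
have t_lt_i : all (fun j : 'I_m => (j < i)%N) t.
  by apply: (order_path_min (leT := fun i j : 'I_m => (j < i)%N)) st => ? ? ? /= h1 h2; apply: ltn_trans h1.
case: ha => [/eqP ai | at_].
  subst i; rewrite addepsE eqxx addn1 iterS (@eq_ordered_monr f _ e) // => j jt.
  rewrite addepsE; case: (eqVneq j a) => [ja|_]; last by rewrite addn0.
  by move: t_lt_i => /allP /(_ j jt); rewrite ja ltnn.
have ai : (a < i)%N by move: t_lt_i => /allP /(_ a at_).
by rewrite addepsE ez // -val_eqE /= gtn_eqF //= IH // (path_sorted st).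
Qed.

Lemma ordered_mon_addeps f e a x : (forall i : 'I_m, (a < i)%N -> e i = 0%N) ->
  ordered_mon f (addeps e a) x = f a (ordered_mon f e x).
Proof.
move=> ez; rewrite !ordered_monE ordered_monr_addeps // ?mem_rev ?mem_enum //.
rewrite rev_sorted; have : sorted ltn (map val (enum 'I_m)).
  by rewrite val_enum_ord iota_ltn_sorted.
by rewrite sorted_map.
Qed.

Lemma ordered_mon0 f x : ordered_mon f (zeroNm m) x = x.
Proof. by rewrite ordered_monE; elim: (rev _) => //= i t ->; rewrite zeroNmE. Qed.

Lemma linmap_ordered_mon f e : (forall i, linmap (f i)) -> linmap (ordered_mon f e).
Proof.
move=> lf a x y; rewrite !ordered_monE; elim: (rev _) => //= i t ->.
exact: linmap_iter.
Qed.

End OrderedMonomials.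

Lemma sum_supp1 (T : eqType) (A : nmodType) (s : seq T) (F : T -> A) (x : T) : uniq s ->
  (forall p, p \in s -> p != x -> F p = 0) -> (x \notin s -> F x = 0) ->
  \sum_(p <- s) F p = F x.
Proof.
move=> us F0 Fx; case: (boolP (x \in s)) => xs; last first.
  by rewrite Fx // big1_seq // => p /andP [_ ps]; apply: F0 => //; apply: contraNneq xs => <-.
by rewrite (bigD1_seq x) //= big1_seq ?addr0 // => p /andP [px ps]; apply: F0.
Qed.

Section Expansions.
Variables (K : fieldType) (V W : lmodType K) (m : nat).
Variables (rhoW : GRep K W) (iota : V -> W).
Hypothesis linL : forall i, linmap (opL rhoW i).
Hypothesis linH : forall i, linmap (opH rhoW i).
Hypothesis lin_iota : linmap iota.

Local Notation ix := (ix m).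
Local Notation mon := (@Defs.mon _ _ m rhoW).
Implicit Types (d p q : ix) (t : seq (ix * V)) (a : 'I_m) (x : W).

Definition ix_le q p := forall i, (q.1 i <= p.1 i)%N /\ (q.2 i <= p.2 i)%N.

Lemma ix_le_trans p q d : ix_le p q -> ix_le q d -> ix_le p d.
Proof.
by move=> pq qd i; have [? ?] := pq i; have [? ?] := qd i; split; apply: leq_trans; eauto.
Qed.

Definition mon_sum t : W := \sum_(e <- t) mon e.1 (iota e.2).

Definition coef_at d t : V := \sum_(e <- t) (if e.1 == d then e.2 else 0).

Lemma linmap_mon p : linmap (mon p).
Proof. exact: linmap_comp (linmap_ordered_mon _ linL) (linmap_ordered_mon _ linH). Qed.

Lemma linmap_mon_iota p : linmap (fun u => mon p (iota u)).
Proof. exact: linmap_comp lin_iota (linmap_mon p). Qed.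

Lemma mon_iota0 p : mon p (iota 0) = 0.
Proof. exact: linmap0 (linmap_mon_iota p). Qed.

Lemma mon_sum_cat t1 t2 : mon_sum (t1 ++ t2) = mon_sum t1 + mon_sum t2.
Proof. by rewrite /mon_sum big_cat. Qed.

Lemma mon_sum_nil : mon_sum [::] = 0.
Proof. by rewrite /mon_sum big_nil. Qed.

Lemma mon_sum_seq1 e : mon_sum [:: e] = mon e.1 (iota e.2).
Proof. by rewrite /mon_sum big_seq1. Qed.

Lemma scale_mon_sum c t : c *: mon_sum t = mon_sum [seq (e.1, c *: e.2) | e <- t].
Proof.
rewrite /mon_sum big_map scaler_sumr; apply: eq_bigr => e _ /=.
by rewrite linmapZ // (linmapZ (linmap_mon _)).
Qed.

Lemma coef_at_cat d t1 t2 : coef_at d (t1 ++ t2) = coef_at d t1 + coef_at d t2.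
Proof. by rewrite /coef_at big_cat. Qed.

Lemma mon_zero x : mon (zeroNm m, zeroNm m) x = x.
Proof. by rewrite /Defs.mon /monH /monL -!/(ordered_mon _ _ _) !ordered_mon0. Qed.

Lemma monH_addeps q a x : (forall i : 'I_m, (a < i)%N -> q.1 i = 0%N) ->
  mon (addeps q.1 a, q.2) x = opH rhoW a (mon q x).
Proof. by move=> qz; rewrite /Defs.mon /monH -!/(ordered_mon _ _ _) ordered_mon_addeps. Qed.

Lemma monL_addeps q a x : q.1 = zeroNm m -> (forall i : 'I_m, (a < i)%N -> q.2 i = 0%N) ->
  mon (q.1, addeps q.2 a) x = opL rhoW a (mon q x).
Proof.
move=> q1 qz; rewrite /Defs.mon /monH /monL -!/(ordered_mon _ _ _) q1 !ordered_mon0.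
exact: ordered_mon_addeps.
Qed.

(* The outermost factor of [H^h L^l] is [H_a] for the largest [a] with [h_a <> 0],
   or, when [h = 0], [L_a] for the largest [a] with [l_a <> 0]. *)
Definition splitH a p p' :=
  [/\ p.1 = addeps p'.1 a, p.2 = p'.2 & forall i : 'I_m, (a < i)%N -> p'.1 i = 0%N].

Definition splitL a p p' :=
  [/\ p.1 = zeroNm m, p'.1 = zeroNm m, p.2 = addeps p'.2 a
    & forall i : 'I_m, (a < i)%N -> p'.2 i = 0%N].

Lemma split_ix p : p = (zeroNm m, zeroNm m) \/ exists a p', splitH a p p' \/ splitL a p p'.
Proof.
case: p => h l; case: (eqVneq h (zeroNm m)) => [->|/last_pos [a [ha hz]]]; last first.
  right; exists a, (subeps h a, l); left; split=> //=; first by rewrite subepsK.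
  by move=> i ai; rewrite subepsE hz.
case: (eqVneq l (zeroNm m)) => [->|/last_pos [a [la lz]]]; first by left.
right; exists a, (zeroNm m, subeps l a); right; split=> //=; first by rewrite subepsK.
by move=> i ai; rewrite subepsE lz.
Qed.

(* [X] is the outermost factor of [p = lift p'], and [lift] describes how [X]
   acts on all monomials below [p']. *)
Definition mon_factor (X : W -> W) a (lift : ix -> ix) p' p : Prop :=
  [/\ forall q x, ix_le q p' -> mon (lift q) x = X (mon q x),
      forall q, ix_le q p' -> ix_le (lift q) p,
      forall q, ixwt (lift q) = (ixwt q + (m - a))%N,
      lift p' = p & ix_le p' p].

Lemma mon_factor_ixwt X a lift p' p : mon_factor X a lift p' p -> (ixwt p' < ixwt p)%N.
Proof. by case=> _ _ lift_wt <- _; rewrite lift_wt; have := ltn_ord a; lia. Qed.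

Lemma splitH_factor a p p' : splitH a p p' ->
  mon_factor (opH rhoW a) a (fun q => (addeps q.1 a, q.2)) p' p.
Proof.
case: p => h l [/= -> -> p'z]; split=> //.
- move=> q x qp'; apply: monH_addeps => i ai; have [q1 _] := qp' i.
  by apply/eqP; rewrite -leqn0 -(p'z i ai).
- by move=> q qp' i; have [q1 q2] := qp' i; rewrite /= !addepsE leq_add2r.
- by move=> q; rewrite /ixwt /= wt_addeps addnAC.
- by move=> i; rewrite /= addepsE leq_addr.
Qed.

Lemma splitL_factor a p p' : splitL a p p' ->
  mon_factor (opL rhoW a) a (fun q => (q.1, addeps q.2 a)) p' p.
Proof.
case: p => h l [/= -> p'1 -> p'z]; split.
- move=> q x qp'; apply: monL_addeps.
    by apply/ffunP => i; have [q1 _] := qp' i; move: q1; rewrite p'1 !zeroNmE leqn0 => /eqP.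
  by move=> i ai; have [_ q2] := qp' i; apply/eqP; rewrite -leqn0 -(p'z i ai).
- by move=> q qp' i; have [q1 q2] := qp' i; rewrite /= !addepsE leq_add2r -p'1.
- by move=> q; rewrite /ixwt /= wt_addeps addnA.
- by rewrite p'1.
- by move=> i; rewrite /= addepsE leq_addr p'1.
Qed.

Lemma mon_sum_factor X a lift p' p t : linmap X -> mon_factor X a lift p' p ->
  (forall e, e \in t -> ix_le e.1 p') ->
  X (mon_sum t) = mon_sum [seq (lift e.1, e.2) | e <- t].
Proof.
move=> lX [liftE _ _ _ _] tp'; rewrite /mon_sum linmap_sum // big_map big_seq [RHS]big_seq.
by apply: eq_bigr => e et /=; rewrite liftE //; apply: tp'.
Qed.

Lemma is_deg_mon_sum t d : (forall e, e \in t -> e.2 != 0 -> succeq2 d e.1) ->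
  coef_at d t != 0 -> is_deg rhoW iota (mon_sum t) d.
Proof.
move=> t_le coef_d; exists (coef_at^~ t), (undup (map fst t)); split=> //.
- exact: undup_uniq.
- move=> p; rewrite mem_undup => pt; rewrite /coef_at big1_seq // => e /andP [_ et].
  by case: eqP => // ep; move: pt; rewrite -ep map_f.
- rewrite /pbw_sum /coef_at (eq_bigr (fun p => \sum_(e <- t)
      (if e.1 == p then mon e.1 (iota e.2) else 0))); last first.
    move=> p _; rewrite (linmap_sum _ _ (linmap_mon_iota p)); apply: eq_bigr => e _.
    by case: eqP => [->|_] //; rewrite mon_iota0.
  rewrite exchange_big /mon_sum; apply: eq_big_seq => e et.
  rewrite (@sum_supp1 _ _ _ _ e.1) ?undup_uniq ?eqxx // => [p _ /negbTE|].
    by rewrite eq_sym => ->.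
  by move=> /negP[]; rewrite mem_undup map_f.
- move=> p cp; have [e et /andP [/eqP <- e2]] : exists2 e, e \in t & (e.1 == p) && (e.2 != 0).
    apply/hasP; apply: contraR cp => /hasPn t0; rewrite /coef_at big1_seq // => e /andP [_ et].
    by move: (t0 e et); case: eqP => //= _; rewrite negbK => /eqP.
  exact: t_le.
Qed.

(* Satisfied by [I] with [sigma = 1] and by [J] with [sigma = -1]. *)
Record IJ_like (sigma : K) (k : nat) (Z : nat -> W -> W) (ZV : nat -> V -> V) : Prop := {
  linmap_Z : forall n, linmap (Z n);
  linmap_ZV : forall n, linmap (ZV n);
  Z_iota : forall n u, Z n (iota u) = iota (ZV n u);
  comm_H_Z : forall (a n : nat) y, comm (opH rhoW a) (Z n) y = sigma *: Z (a + n)%N y;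
  comm_L_Z : forall (a n : nat) y, comm (opL rhoW a) (Z n) y = (n%:R - a%:R) *: Z (a + n)%N y;
  ZV_vanish : forall j u, (k < j)%N -> ZV j u = 0 }.

Variables (sigma : K) (k : nat) (Z : nat -> W -> W) (ZV : nat -> V -> V).
Hypothesis ZF : IJ_like sigma k Z ZV.

Lemma Z_opH (a n : nat) y : Z n (opH rhoW a y) = opH rhoW a (Z n y) - sigma *: Z (a + n)%N y.
Proof. by rewrite -(comm_H_Z ZF) /comm opprB addrC subrK. Qed.

Lemma Z_opL (a n : nat) y :
  Z n (opL rhoW a y) = opL rhoW a (Z n y) - (n%:R - a%:R) *: Z (a + n)%N y.
Proof. by rewrite -(comm_L_Z ZF) /comm opprB addrC subrK. Qed.

(* Commuting [Z_n] past a factor of index [a] lowers the weight by [m - a] and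
   produces [Z_(n+a)], which kills [V] once [n + a > k]. *)
Definition coarse_expansion p := forall n u, exists t,
  (forall e, e \in t -> ix_le e.1 p /\ (ixwt e.1 + m + n <= ixwt p + k)%N) /\
  Z n (mon p (iota u)) = mon p (iota (ZV n u)) + mon_sum t.

Lemma coarse_expansion_factor X a (gamma : nat -> K) lift p' p :
  linmap X -> mon_factor X a lift p' p ->
  (forall n y, Z n (X y) = X (Z n y) - gamma n *: Z (a + n)%N y) ->
  coarse_expansion p' -> coarse_expansion p.
Proof.
move=> lX fac XZ IH n u; have [liftE lift_le lift_wt lift_p' p'p] := fac.
have monp x : mon p x = X (mon p' x) by rewrite -lift_p' liftE.
have [t1 [t1_le e1]] := IH n u.
have [t2 [t2_le e2]] := IH (a + n)%N u.
have wt_p : ixwt p = (ixwt p' + (m - a))%N by rewrite -lift_p' lift_wt.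
have am := ltn_ord a.
set t0 := if (a + n <= k)%N then [:: (p', - gamma n *: ZV (a + n)%N u)] else [::].
exists ([seq (lift e.1, e.2) | e <- t1] ++ t0 ++ [seq (e.1, - gamma n *: e.2) | e <- t2]).
split.
  move=> e; rewrite !mem_cat => /or3P [/mapP [e' e't1 ->] | | /mapP [e' e't2 ->]] /=.
  - have [le1 w1] := t1_le e' e't1; split; first exact: lift_le.
    by rewrite lift_wt wt_p; move: (ixwt e'.1) w1 => x; lia.
  - rewrite /t0; case: ifP => //= ank; rewrite inE => /eqP -> /=.
    by split=> //; rewrite wt_p; lia.
  - have [le2 w2] := t2_le e' e't2; split; first exact: ix_le_trans le2 p'p.
    by rewrite wt_p; move: (ixwt e'.1) w2 => x; lia.
rewrite monp XZ e1 linmapD // -monp (mon_sum_factor lX fac (fun e et => (t1_le e et).1)).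
rewrite e2 scalerDr opprD -!scaleNr scale_mon_sum -!addrA !mon_sum_cat.
congr (_ + (_ + (_ + _))).
rewrite -(linmapZ (linmap_mon_iota p')) /t0; case: ifP => ank; first by rewrite mon_sum_seq1.
by rewrite (ZV_vanish ZF) ?scaler0 ?mon_iota0 ?mon_sum_nil // ltnNge ank.
Qed.

Lemma coarse_expansion_mon p : coarse_expansion p.
Proof.
move: {2}(ixwt p) (erefl (ixwt p)) => N; elim/ltn_ind: N p => N IH p pN.
have [->|[a [p' [sp|sp]]]] := split_ix p.
- move=> n u; exists [::]; split=> //.
  by rewrite !mon_zero mon_sum_nil addr0 (Z_iota ZF).
- have fac := splitH_factor sp.
  apply: (coarse_expansion_factor (linH a) fac (fun n y => Z_opH a n y)).
  by apply: (IH (ixwt p')) => //; rewrite -pN (mon_factor_ixwt fac).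
- have fac := splitL_factor sp.
  apply: (coarse_expansion_factor (linL a) fac (fun n y => Z_opL a n y)).
  by apply: (IH (ixwt p')) => //; rewrite -pN (mon_factor_ixwt fac).
Qed.

Section LeadingTerms.
Variables (j : 'I_m) (n : nat).
Hypothesis njk : (n + j)%N = k.

Definition coefH p : K := - (sigma * (p.1 j)%:R).

Definition coefL p : K := (p.2 j)%:R * (j%:R - n%:R).

(* Commuting [Z_n] past a single [H_j] or [L_j] produces [Z_k], which acts on
   [V] by a scalar; these are the only terms of top weight. *)
Definition lead_terms p u : seq (ix * V) :=
  [:: ((subeps p.1 j, p.2), coefH p *: ZV k u); ((p.1, subeps p.2 j), coefL p *: ZV k u)].

Lemma mon_sum_lead_terms p u : mon_sum (lead_terms p u) =
  mon (subeps p.1 j, p.2) (iota (coefH p *: ZV k u))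
  + mon (p.1, subeps p.2 j) (iota (coefL p *: ZV k u)).
Proof. by rewrite /mon_sum !big_cons big_nil addr0. Qed.

Definition fine_expansion p := forall u, exists t,
  (forall e, e \in t -> ix_le e.1 p /\ (ixwt e.1 + m + n < ixwt p + k)%N) /\
  Z n (mon p (iota u)) = mon p (iota (ZV n u)) + mon_sum (lead_terms p u) + mon_sum t.

Lemma fine_expansion_factor X a (gamma : nat -> K) lift p' p :
  linmap X -> mon_factor X a lift p' p ->
  (forall n y, Z n (X y) = X (Z n y) - gamma n *: Z (a + n)%N y) ->
  (forall u, X (mon_sum (lead_terms p' u))
             + (if a == j then mon p' (iota (- gamma n *: ZV k u)) else 0)
           = mon_sum (lead_terms p u)) ->
  coarse_expansion p' -> fine_expansion p' -> fine_expansion p.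
Proof.
move=> lX fac XZ X_lead coarse IH u; have [liftE lift_le lift_wt lift_p' p'p] := fac.
have monp x : mon p x = X (mon p' x) by rewrite -lift_p' liftE.
have [t1 [t1_le e1]] := IH u.
have [t2 [t2_le e2]] := coarse (a + n)%N u.
have wt_p : ixwt p = (ixwt p' + (m - a))%N by rewrite -lift_p' lift_wt.
have am := ltn_ord a.
set t0 := if (a < j)%N then [:: (p', - gamma n *: ZV (a + n)%N u)] else [::].
exists ([seq (lift e.1, e.2) | e <- t1] ++ t0 ++ [seq (e.1, - gamma n *: e.2) | e <- t2]).
split.
  move=> e; rewrite !mem_cat => /or3P [/mapP [e' e't1 ->] | | /mapP [e' e't2 ->]] /=.
  - have [le1 w1] := t1_le e' e't1; split; first exact: lift_le.
    by rewrite lift_wt wt_p; move: (ixwt e'.1) w1 => x; lia.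
  - rewrite /t0; case: ifP => //= aj; rewrite inE => /eqP -> /=.
    by split=> //; rewrite wt_p; lia.
  - have [le2 w2] := t2_le e' e't2; split; first exact: ix_le_trans le2 p'p.
    by rewrite wt_p; move: (ixwt e'.1) w2 => x; lia.
rewrite monp XZ e1 !linmapD // -monp (mon_sum_factor lX fac (fun e et => (t1_le e et).1)).
rewrite e2 scalerDr opprD -!scaleNr scale_mon_sum !mon_sum_cat -X_lead.
rewrite -(linmapZ (linmap_mon_iota p')).
suff -> : mon p' (iota (- gamma n *: ZV (a + n)%N u)) =
   (if a == j then mon p' (iota (- gamma n *: ZV k u)) else 0) + mon_sum t0.
  by rewrite -!addrA; do 2 congr (_ + _); apply: addrCA.
rewrite /t0; case: (ltngtP a j) => [aj|ja|aj].
- by rewrite -val_eqE /= ltn_eqF // mon_sum_seq1 add0r.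
- rewrite -val_eqE /= gtn_eqF // mon_sum_nil addr0.
  by rewrite (ZV_vanish ZF) ?scaler0 ?mon_iota0 //; lia.
- by rewrite (val_inj aj) eqxx mon_sum_nil addr0 -njk addnC.
Qed.

Lemma lead_terms_splitH a p p' : splitH a p p' -> forall u,
  opH rhoW a (mon_sum (lead_terms p' u))
  + (if a == j then mon p' (iota (- sigma *: ZV k u)) else 0)
  = mon_sum (lead_terms p u).
Proof.
case: p => h l [/= -> -> p'z] u; case: p' p'z => h' l' /= p'z.
rewrite !mon_sum_lead_terms linmapD // /coefH /coefL /=.
rewrite -[opH rhoW a (mon (subeps h' j, l') _)](monH_addeps (q := (subeps h' j, l'))) /=; last first.
  by move=> i ai; rewrite subepsE p'z.
rewrite -[opH rhoW a (mon (h', subeps l' j) _)](monH_addeps (q := (h', subeps l' j))) //=.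
rewrite addepsE; case: (eqVneq a j) => [aj|ne]; last first.
  by rewrite addr0 addeps_subepsC // /= addn0.
subst j; rewrite /= addn1 addrAC; congr (_ + _).
case: (posnP (h' a)) => [h0|hpos].
  by rewrite h0 mulr0 oppr0 scale0r mon_iota0 add0r addepsK mulr1 scaleNr.
rewrite subepsK // addepsK -(linmapD (linmap_mon_iota _)) -scalerDl.
by rewrite -addn1 natrD mulrDr mulr1 opprD.
Qed.

Lemma lead_terms_splitL a p p' : splitL a p p' -> forall u,
  opL rhoW a (mon_sum (lead_terms p' u))
  + (if a == j then mon p' (iota (- (n%:R - a%:R) *: ZV k u)) else 0)
  = mon_sum (lead_terms p u).
Proof.
case: p => h l [/= -> p'1 -> p'z] u; case: p' p'1 p'z => h' l' /= -> p'z.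
rewrite !mon_sum_lead_terms linmapD // /coefH /coefL /= !zeroNmE mulr0 oppr0 !scale0r.
rewrite !mon_iota0 linmap0 // !add0r.
rewrite -[opL rhoW a (mon (zeroNm m, subeps l' j) _)]
  (monL_addeps (q := (zeroNm m, subeps l' j))) //=; last first.
  by move=> i ai; rewrite subepsE p'z.
rewrite addepsE; case: (eqVneq a j) => [aj|ne]; last first.
  by rewrite addr0 addeps_subepsC // /= addn0.
subst j; rewrite /= addn1.
case: (posnP (l' a)) => [l0|lpos].
  by rewrite l0 mul0r scale0r mon_iota0 add0r addepsK mul1r opprB.
rewrite subepsK // addepsK -(linmapD (linmap_mon_iota _)) -scalerDl.
by rewrite -addn1 natrD mulrDl mul1r opprB.
Qed.

Lemma fine_expansion_mon p : fine_expansion p.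
Proof.
move: {2}(ixwt p) (erefl (ixwt p)) => N; elim/ltn_ind: N p => N IH p pN.
have [->|[a [p' [sp|sp]]]] := split_ix p.
- move=> u; exists [::]; split=> //.
  rewrite !mon_zero mon_sum_nil addr0 (Z_iota ZF) mon_sum_lead_terms /coefH /coefL /=.
  by rewrite !zeroNmE mulr0 oppr0 mul0r !scale0r !mon_iota0 !addr0.
- have fac := splitH_factor sp.
  apply: (fine_expansion_factor (linH a) fac (fun n y => Z_opH a n y) (lead_terms_splitH sp)).
    exact: coarse_expansion_mon.
  by apply: (IH (ixwt p')) => //; rewrite -pN (mon_factor_ixwt fac).
- have fac := splitL_factor sp.
  apply: (fine_expansion_factor (linL a) fac (fun n y => Z_opL a n y) (lead_terms_splitL sp)).
    exact: coarse_expansion_mon.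
  by apply: (IH (ixwt p')) => //; rewrite -pN (mon_factor_ixwt fac).
Qed.

Lemma mon_sum_lead_terms0 p : mon_sum (lead_terms p 0) = 0.
Proof.
by rewrite mon_sum_lead_terms (linmap0 (linmap_ZV ZF k)) !scaler0 !mon_iota0 addr0.
Qed.

Lemma Z_sub_scalar_pbw_sum c s alpha : (forall v, ZV n v = alpha *: v) -> exists rest,
  (forall e, e \in rest -> exists2 p, c p != 0 & (ixwt e.1 + m + n < ixwt p + k)%N) /\
  Z n (pbw_sum rhoW iota c s) - alpha *: pbw_sum rhoW iota c s
    = mon_sum (flatten [seq lead_terms p (c p) | p <- s]) + mon_sum rest.
Proof.
move=> ZVn; elim: s => [|p s [rest [rest_lt IH]]].
  exists [::]; split=> //.
  by rewrite /pbw_sum big_nil (linmap0 (linmap_Z ZF n)) scaler0 subr0 !mon_sum_nil addr0.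
have [tp [tp_lt ep]] : exists tp,
    (forall e, e \in tp -> exists2 q, c q != 0 & (ixwt e.1 + m + n < ixwt q + k)%N) /\
    Z n (mon p (iota (c p))) - alpha *: mon p (iota (c p))
      = mon_sum (lead_terms p (c p)) + mon_sum tp.
  case: (eqVneq (c p) 0) => [->|cp].
    exists [::]; split=> //.
    by rewrite mon_iota0 (linmap0 (linmap_Z ZF n)) scaler0 subr0 mon_sum_lead_terms0 mon_sum_nil addr0.
  have [t [t_lt e]] := fine_expansion_mon p (c p).
  exists t; split=> [e' /t_lt [_ lt]|]; first by exists p.
  by rewrite e -(linmapZ (linmap_mon_iota p)) -ZVn addrC !addrA addNr add0r.
exists (tp ++ rest); split.
  by move=> e; rewrite mem_cat => /orP [/tp_lt | /rest_lt].
have -> : pbw_sum rhoW iota c (p :: s) = mon p (iota (c p)) + pbw_sum rhoW iota c s.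
  by rewrite /pbw_sum big_cons.
rewrite (linmapD (linmap_Z ZF n)) scalerDr opprD addrACA ep IH.
by rewrite (mon_sum_cat tp) (mon_sum_cat (lead_terms p (c p)) (flatten _)) addrACA.
Qed.

Lemma is_deg_Z_sub_scalar c s alpha d :
  (forall v, ZV n v = alpha *: v) ->
  (forall p, c p != 0 -> (ixwt p + k <= ixwt d + m + n)%N) ->
  (forall p e, e \in lead_terms p (c p) -> e.2 != 0 -> succeq2 d e.1) ->
  \sum_(p <- s) coef_at d (lead_terms p (c p)) != 0 ->
  is_deg rhoW iota (Z n (pbw_sum rhoW iota c s) - alpha *: pbw_sum rhoW iota c s) d.
Proof.
move=> ZVn wt_le lead_le coef_d.
have [rest [rest_lt ->]] := Z_sub_scalar_pbw_sum c s ZVn.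
have rest_wt e : e \in rest -> (ixwt e.1 < ixwt d)%N.
  by case/rest_lt => p /wt_le; lia.
rewrite -mon_sum_cat; apply: is_deg_mon_sum.
  move=> e; rewrite mem_cat => /orP [/flattenP [t /mapP [p _ ->] et] | /rest_wt lt] e2.
    exact: lead_le et e2.
  by right; left.
rewrite coef_at_cat (_ : coef_at d rest = 0) ?addr0; last first.
  rewrite /coef_at big1_seq // => e /andP [_ /rest_wt].
  by case: eqP => [->|//]; rewrite ltnn.
by rewrite /coef_at big_flatten big_map.
Qed.

Lemma sum_coef_lead_terms c s d : uniq s -> fsupp c s ->
  \sum_(p <- s) coef_at d (lead_terms p (c p)) =
    coefH (addeps d.1 j, d.2) *: ZV k (c (addeps d.1 j, d.2))
    + coefL (d.1, addeps d.2 j) *: ZV k (c (d.1, addeps d.2 j)).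
Proof.
move=> us cs; case: d => d1 d2 /=; rewrite /coef_at.
under eq_bigr do rewrite !big_cons big_nil addr0 /=.
have c0 q : q \notin s -> ZV k (c q) = 0 by move/cs ->; rewrite (linmap0 (linmap_ZV ZF k)).
rewrite big_split /=; congr (_ + _).
- rewrite (@sum_supp1 _ _ _ _ (addeps d1 j, d2)) /= ?addepsK ?eqxx // => [p _ pd|/c0->].
    case: eqP => // -[p1 p2]; case: (posnP (p.1 j)) => [p0|ppos].
      by rewrite /coefH p0 mulr0 oppr0 scale0r.
    by move: pd; rewrite -p1 -p2 subepsK // -surjective_pairing eqxx.
  by rewrite scaler0.
- rewrite (@sum_supp1 _ _ _ _ (d1, addeps d2 j)) /= ?addepsK ?eqxx // => [p _ pd|/c0->].
    case: eqP => // -[p1 p2]; case: (posnP (p.2 j)) => [p0|ppos].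
      by rewrite /coefL p0 mul0r scale0r.
    by move: pd; rewrite -p1 -p2 subepsK // -surjective_pairing eqxx.
  by rewrite scaler0.
Qed.

Lemma mem_lead_terms_neq0 p u e : e \in lead_terms p u -> e.2 != 0 -> u != 0 /\
  ((e.1 = (subeps p.1 j, p.2) /\ (0 < p.1 j)%N) \/
   (e.1 = (p.1, subeps p.2 j) /\ (0 < p.2 j)%N)).
Proof.
have ZVk0 : ZV k 0 = 0 := linmap0 (linmap_ZV ZF k).
rewrite !inE => /orP [] /eqP -> /= e0; (split; first by apply: contraNneq e0 => ->; rewrite ZVk0 scaler0).
  by left; split=> //; rewrite lt0n; apply: contraNneq e0 => pj; rewrite /coefH pj mulr0 oppr0 scale0r.
by right; split=> //; rewrite lt0n; apply: contraNneq e0 => pj; rewrite /coefL pj mul0r scale0r.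
Qed.

Lemma coefL_neq0 p : [pchar K] =i pred0 -> odd k -> (0 < p.2 j)%N -> coefL p != 0.
Proof.
move=> /pcharf0P char0 odd_k pj; rewrite mulf_neq0 ?char0 -?lt0n // subr_eq0.
have /negPf jn : j != n :> nat by apply: contraTneq odd_k => jn; rewrite -njk -jn addnn odd_double.
case: ltngtP jn => // [lt_jn | lt_nj] _.
  by rewrite eq_sym -subr_eq0 -natrB ?(ltnW lt_jn) // char0 subn_eq0 -ltnNge.
by rewrite -subr_eq0 -natrB ?(ltnW lt_nj) // char0 subn_eq0 -ltnNge.
Qed.

Lemma is_deg_Z_sub_H c s d alpha_n alpha_k :
  [pchar K] =i pred0 -> sigma != 0 -> alpha_k != 0 ->
  (forall v, ZV n v = alpha_n *: v) -> (forall v, ZV k v = alpha_k *: v) ->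
  uniq s -> fsupp c s -> c d != 0 -> (forall p, c p != 0 -> succeq2 d p) -> (0 < d.1 j)%N ->
  is_deg rhoW iota (Z n (pbw_sum rhoW iota c s) - alpha_n *: pbw_sum rhoW iota c s)
    (subeps d.1 j, d.2).
Proof.
move=> /pcharf0P char0 sigma0 ak0 ZVn ZVk us cs cd d_max dj.
apply: is_deg_Z_sub_scalar ZVn _ _ _.
- move=> p /d_max/succeq2_ixwt; move: (ixwt_subeps1 dj) (ltn_ord j); lia.
- move=> p e et /[dup] e0 /(mem_lead_terms_neq0 et) [/d_max dp [[-> pj]|[-> pj]]].
    exact: succeq2_subeps1.
  by right; apply: succ2_subeps2_subeps1.
have dq := succ2_addeps2_subeps1 dj.
have cq : c (subeps d.1 j, addeps d.2 j) = 0.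
  apply/eqP; apply: contraT => /d_max [qd | /succ2_asym //].
  by move: dq; rewrite qd => /succ2_irr.
rewrite sum_coef_lead_terms //= subepsK // -surjective_pairing cq.
rewrite (linmap0 (linmap_ZV ZF k)) scaler0 addr0 ZVk scalerA scaler_eq0 negb_or cd andbT.
by rewrite mulf_neq0 // oppr_eq0 mulf_neq0 // char0 -lt0n.
Qed.

Lemma is_deg_Z_sub_L c s l alpha_n alpha_k :
  alpha_k != 0 -> (forall v, ZV n v = alpha_n *: v) -> (forall v, ZV k v = alpha_k *: v) ->
  uniq s -> fsupp c s -> (forall p, c p != 0 -> succeq2 (zeroNm m, l) p) ->
  (0 < l j)%N -> (forall i : 'I_m, (j < i)%N -> l i = 0%N) ->
  coefL (zeroNm m, l) *: c (zeroNm m, l) - sigma *: c (addeps (zeroNm m) j, subeps l j) != 0 ->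
  is_deg rhoW iota (Z n (pbw_sum rhoW iota c s) - alpha_n *: pbw_sum rhoW iota c s)
    (zeroNm m, subeps l j).
Proof.
move=> ak0 ZVn ZVk us cs d_max lj lz coef0.
apply: is_deg_Z_sub_scalar ZVn _ _ _.
- move=> p /d_max/succeq2_ixwt; move: (ixwt_subeps2 (p := (zeroNm m, l)) lj) (ltn_ord j) => /=.
  lia.
- move=> p e et /[dup] e0 /(mem_lead_terms_neq0 et) [/d_max dp [[-> pj]|[-> pj]]].
    exact: succeq2_zero_subeps.
  exact: (succeq2_subeps2 (d := (zeroNm m, l))).
rewrite sum_coef_lead_terms //= subepsK // !ZVk /coefH addepsE zeroNmE eqxx mulr1.
rewrite !scalerA (mulrC (- sigma)) (mulrC (coefL _)) -!scalerA -scalerDr.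
by rewrite scaler_eq0 negb_or ak0 /= scaleNr addrC scalerA; exact: coef0.
Qed.
End LeadingTerms.

Section ScalarTopIndices.
Variable zeta : nat -> K.
Hypothesis ZV_scalar :
  forall (i : nat) v, (i <= m - 1)%N -> ZV (k - i)%N v = zeta (k - i)%N *: v.
Hypothesis m_le_k : (m - 1 <= k)%N.

Let ZV_scalar_ord (r : 'I_m) v : ZV (k - r)%N v = zeta (k - r)%N *: v.
Proof. by apply: ZV_scalar; have := ltn_ord r; lia. Qed.

Let ZV_scalar_k v : ZV k v = zeta k *: v.
Proof. by rewrite -[k]subn0 ZV_scalar. Qed.

Lemma is_deg_Z_sub_scalar_H c s d (r : 'I_m) :
  [pchar K] =i pred0 -> sigma != 0 -> zeta k != 0 ->
  uniq s -> fsupp c s -> c d != 0 -> (forall p, c p != 0 -> succeq2 d p) -> d.1 r != 0%N ->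
  is_deg rhoW iota
    (Z (k - r) (pbw_sum rhoW iota c s) - zeta (k - r)%N *: pbw_sum rhoW iota c s)
    (subeps d.1 r, d.2).
Proof.
move=> char0 sigma0 zk0 us cs cd d_max dr.
apply: (is_deg_Z_sub_H (subnK_ord r m_le_k) char0 sigma0 zk0 (ZV_scalar_ord r) ZV_scalar_k)
  => //.
by rewrite lt0n.
Qed.

Lemma is_deg_Z_sub_scalar_L c s l (r : 'I_m) : zeta k != 0 ->
  uniq s -> fsupp c s -> (forall p, c p != 0 -> succeq2 (zeroNm m, l) p) ->
  l r != 0%N -> (forall i : 'I_m, (r < i)%N -> l i = 0%N) ->
  coefL r (k - r) (zeroNm m, l) *: c (zeroNm m, l)
    - sigma *: c (addeps (zeroNm m) r, subeps l r) != 0 ->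
  is_deg rhoW iota
    (Z (k - r) (pbw_sum rhoW iota c s) - zeta (k - r)%N *: pbw_sum rhoW iota c s)
    (zeroNm m, subeps l r).
Proof.
move=> zk0 us cs d_max lr lz coef0.
apply: (is_deg_Z_sub_L (subnK_ord r m_le_k) zk0 (ZV_scalar_ord r) ZV_scalar_k us cs d_max _ lz coef0).
by rewrite lt0n.
Qed.

End ScalarTopIndices.

End Expansions.

Section InducedModule.
Variables (K : fieldType) (V W : lmodType K) (m k : nat).
Variables (rhoV : GRep K V) (rhoW : GRep K W) (iota : V -> W).
Hypotheses (GV : is_Grep m rhoV) (GW : is_Grep 0 rhoW) (hom : Ghom m rhoV rhoW iota).

Lemma IJ_like_IJ :
  (forall j v, (0 < j)%N -> opI rhoV (k + j)%N v = 0 /\ opJ rhoV (k + j)%N v = 0) ->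
  IJ_like rhoW iota 1 k (opI rhoW) (opI rhoV) /\ IJ_like rhoW iota (-1) k (opJ rhoW) (opJ rhoV).
Proof.
move=> vanish; have [_ [_ _ homI homJ _]] := hom.
have vanish_gt j v : (k < j)%N -> opI rhoV j v = 0 /\ opJ rhoV j v = 0.
  by move=> kj; rewrite -(subnKC (ltnW kj)); apply: (vanish (j - k)%N v); rewrite subn_gt0.
split; split.
- exact: lin_I GW.
- exact: lin_I GV.
- by move=> n u; rewrite homI.
- by move=> a n y; rewrite (br_HI GW) scale1r.
- by move=> a n y; rewrite (br_LI GW) !add0n.
- by move=> j u /(vanish_gt j u) [].
- exact: lin_J GW.
- exact: lin_J GV.
- by move=> n u; rewrite homJ.
- by move=> a n y; rewrite (br_HJ GW) scaleN1r.
- by move=> a n y; rewrite (br_LJ GW) !add0n.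
- by move=> j u /(vanish_gt j u) [].
Qed.

End InducedModule.

Lemma subr_or_addr_neq0 (K : numFieldType) (V : lmodType K) (x y : V) :
  x != 0 -> x - y != 0 \/ x + y != 0.
Proof.
move=> x0; apply/orP; rewrite -negb_and; apply: contra x0 => /andP [/eqP xy /eqP xy'].
have : (x - y) + (x + y) == 0 by rewrite xy xy' addr0.
by rewrite addrACA addNr addr0 -mulr2n -scaler_nat scaler_eq0 pnatr_eq0.
Qed.

Unset Implicit Arguments.
Set Strict Implicit.

Theorem lemma3p6 (R : realType) (m : nat) (V W : lmodType R[i])
  (rhoV : GRep R[i] V) (rhoW : GRep R[i] W) (iota : V -> W)
  (k : nat) (alpha beta : nat -> R[i]) (w : W) (h l : Nm m) :
  (0 < m)%N ->
  is_Grep m rhoV -> irreducible rhoV ->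
  odd k -> (m - 1 <= k)%N ->
  (* L_{k+j}, H_{k+j}, I_{k+j}, J_{k+j} (j > 0) kill V; note L_{k+j} = opL (k+j-m) *)
  (forall (j : nat) (v : V), (0 < j)%N ->
     [/\ opL rhoV (k + j - m)%N v = 0, opH rhoV (k + j - m)%N v = 0,
         opI rhoV (k + j)%N v = 0 & opJ rhoV (k + j)%N v = 0]) ->
  (forall (i : nat) (v : V), (i <= m - 1)%N ->
     opI rhoV (k - i)%N v = alpha (k - i)%N *: v /\ opJ rhoV (k - i)%N v = beta (k - i)%N *: v) ->
  alpha k * beta k != 0 ->
  is_induced m rhoV rhoW iota ->
  PBW_decomp m rhoW iota ->
  ~ (exists v : V, w = iota v) ->
  is_deg rhoW iota w (h, l) ->
  (* (1) *)
  ((forall r : 'I_m, h r != 0%N -> (forall i : 'I_m, (i < r)%N -> h i = 0%N) ->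
      is_deg rhoW iota (opI rhoW (k - r)%N w - alpha (k - r)%N *: w) (subeps h r, l))
  /\
  (* (2) *)
   (h = zeroNm m -> forall s : 'I_m, l s != 0%N ->
      (forall i : 'I_m, (s < i)%N -> l i = 0%N) ->
      is_deg rhoW iota (opI rhoW (k - s)%N w - alpha (k - s)%N *: w) (zeroNm m, subeps l s)
      \/ is_deg rhoW iota (opJ rhoW (k - s)%N w - beta (k - s)%N *: w) (zeroNm m, subeps l s))).
Proof.
move=> _ GV _ odd_k mk vanish scalar ab0 [_ [GW [hom _]]] _ _ [c [s [us cs -> cd d_max]]].
have vanishIJ j v : (0 < j)%N -> opI rhoV (k + j)%N v = 0 /\ opJ rhoV (k + j)%N v = 0.
  by move/(vanish j v) => [].
have [famI famJ] := IJ_like_IJ GV GW hom vanishIJ.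
have [ak0 bk0] : alpha k != 0 /\ beta k != 0 by apply/andP; rewrite -negb_or -mulf_eq0.
have scalarI i v le := (scalar i v le).1; have scalarJ i v le := (scalar i v le).2.
have [linL linH] := (lin_L GW, lin_H GW).
split=> [r hr _ | h0 r lr lz].
  exact: (is_deg_Z_sub_scalar_H linL linH (proj1 hom) famI scalarI mk (@pchar_num _)
    (oner_neq0 _) ak0 us cs cd d_max hr).
move: cd d_max; rewrite h0 => cd d_max.
have x0 : coefL _ r (k - r) (zeroNm m, l) *: c (zeroNm m, l) != 0.
  by rewrite scaler_eq0 negb_or cd (coefL_neq0 (subnK_ord r mk) (@pchar_num _)) ?lt0n.
have [I0 | J0] := subr_or_addr_neq0 (c (addeps (zeroNm m) r, subeps l r)) x0; [left | right].
  by apply: (is_deg_Z_sub_scalar_L linL linH (proj1 hom) famI scalarI mk); rewrite ?scale1r.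
apply: (is_deg_Z_sub_scalar_L linL linH (proj1 hom) famJ scalarJ mk) => //.
by rewrite scaleN1r opprK.
Qed.
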